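(* Let $m\ge 2$ and let $B$ be a blocker in $CK(2m)$ such that $e=[2m-3,2m-2]\in B$ and $f=[2m-2,2m-1]\notin B$. Let $G'$ be the complete convex geometric graph on the $2m-2$ vertices $0,1,\dots,2m-3$ (the subgraph of $CK(2m)$ induced by deleting the endpoints $2m-2,2m-1$ of $f$). Then $B\setminus\{e\}$ is a set of edges of $G'$ and is a blocker in $G'$ (a blocking set of $G'$ of size $m-1$).
   Context: $CK(2m)$ denotes the complete convex geometric graph whose vertices are the $2m$ vertices of a convex polygon, labelled cyclically $0,1,\dots,2m-1$, and whose edges are all straight segments between pairs of vertices. Two edges with four distinct endpoints cross iff their endpoints alternate in the cyclic order. More generally, for a set of $2n$ points in convex position, consider the complete convex geometric graph on them; an SPM is a set of $n$ pairwise disjoint edges (no common endpoint and no crossing), a blocking set is a set of edges containing at least one edge of every SPM, and a blocker is a blocking set of exactly $n$ edges. *)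

From mathcomp Require Import all_boot.
Set Implicit Arguments. Unset Strict Implicit. Unset Printing Implicit Defensive.

(* Complete convex geometric graph on N points in convex position, labelled
   cyclically 0,1,...,N-1 (the cyclic order is the natural order of labels). *)

Definition is_edge (N : nat) (e : nat * nat) : bool := (e.1 < e.2) && (e.2 < N).

(* two edges (with a < b) cross iff their endpoints alternate in cyclic order *)
Definition crossing (e f : nat * nat) : bool :=
  ((e.1 < f.1) && (f.1 < e.2) && (e.2 < f.2)) ||
  ((f.1 < e.1) && (e.1 < f.2) && (f.2 < e.2)).

Definition disjoint_edges (e f : nat * nat) : bool :=
  [&& e.1 != f.1, e.1 != f.2, e.2 != f.1, e.2 != f.2 & ~~ crossing e f].

Definition SPM (n : nat) (M : seq (nat * nat)) : Prop :=
  [/\ all (is_edge n.*2) M, uniq M, size M = n & pairwise disjoint_edges M].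

Definition blocking_set (n : nat) (S : seq (nat * nat)) : Prop :=
  [/\ all (is_edge n.*2) S, uniq S &
      forall M, SPM n M -> has (fun e => e \in S) M].

Definition blocker (n : nat) (S : seq (nat * nat)) : Prop :=
  blocking_set n S /\ size S = n.

(* For k < n, the chords of the 2n-gon whose endpoint sum is 2k - 1 modulo 2n
   are pairwise parallel, hence form a perfect matching M_k; these n matchings
   are pairwise edge-disjoint, so every blocking set of CK(2n) contains at
   least n edges of CK(2n).  Adding the boundary edge f to a perfect matching
   of G' gives one of CK(2m); as f is not in B, the edges of B lying in G'
   (none of which is e) block G'.  Hence B minus e has m - 1 edges, at least
   m - 1 of which lie in G', so all of them do. *)
From mathcomp Require Import all_boot zify.

Set Implicit Arguments.
Unset Strict Implicit.
Unset Printing Implicit Defensive.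

Definition blocks (n : nat) (S : seq (nat * nat)) : Prop :=
  forall M, SPM n M -> has (fun e => e \in S) M.

Definition parallel_class (n k : nat) (e : nat * nat) : bool :=
  ((e.1 + e.2).+1 == k.*2) || ((e.1 + e.2).+1 == k.*2 + n.*2).

Definition parallel_partner (n k x : nat) : nat :=
  if x < k then k.*2 - x.+1 else (k + n).*2 - x.+1.

Definition parallel_matching (n k : nat) : seq (nat * nat) :=
  [seq (x, parallel_partner n k x) | x <- iota 0 k ++ iota k.*2 (n - k)].

Lemma parallel_disjoint_edges n k e f :
  is_edge n.*2 e -> is_edge n.*2 f ->
  parallel_class n k e -> parallel_class n k f -> e != f ->
  disjoint_edges e f.
Proof.
case: e f => a b [c d]; rewrite /is_edge /parallel_class /disjoint_edges /crossing /=.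
by rewrite xpair_eqE; lia.
Qed.

Lemma mem_parallel_matching n k e :
  k < n -> e \in parallel_matching n k -> is_edge n.*2 e && parallel_class n k e.
Proof.
move=> lt_kn /mapP [x]; rewrite mem_cat !mem_iota => x_range ->.
by rewrite /is_edge /parallel_class /parallel_partner /=; case: ifP; lia.
Qed.

Lemma SPM_parallel_matching n k : k < n -> SPM n (parallel_matching n k).
Proof.
move=> lt_kn.
have edge_class e : e \in parallel_matching n k ->
    is_edge n.*2 e && parallel_class n k e by exact: mem_parallel_matching.
have uniq_M : uniq (parallel_matching n k).
  rewrite map_inj_uniq; last by move=> x y [].
  rewrite cat_uniq !iota_uniq andbT /=; apply/hasPn => x.
  by rewrite !mem_iota; lia.
split=> //.
- by apply/allP => e /edge_class /andP [].
- by rewrite size_map size_cat !size_iota; lia.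
- move: uniq_M; rewrite uniq_pairwise.
  apply: (@sub_in_pairwise _ [pred e | is_edge n.*2 e && parallel_class n k e]).
    move=> e f; rewrite !inE => /andP [ee ce] /andP [ef cf].
    exact: parallel_disjoint_edges ee ef ce cf.
  exact/allP.
Qed.

Lemma blocks_count_edges n S : blocks n S -> n <= count (is_edge n.*2) S.
Proof.
move=> blockS.
pose hit k := nth (0, 0) (parallel_matching n k)
                  (find (mem S) (parallel_matching n k)).
have hitP k : k < n ->
    is_edge n.*2 (hit k) && parallel_class n k (hit k) && (hit k \in S).
  move=> lt_kn; have hasS := blockS _ (SPM_parallel_matching lt_kn).
  rewrite (nth_find _ hasS) andbT; apply: mem_parallel_matching => //.
  by apply: mem_nth; rewrite -has_find.
rewrite -size_filter -{1}(size_iota 0 n) -(size_map hit).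
apply: uniq_leq_size.
  rewrite map_inj_in_uniq ?iota_uniq // => i j; rewrite !mem_iota => ri rj hit_ij.
  have /andP [/andP [_ ci] _] := hitP i ri.
  have /andP [/andP [_ cj] _] := hitP j rj.
  by move: ci cj; rewrite hit_ij /parallel_class; lia.
move=> e /mapP [k]; rewrite mem_iota => rk ->.
by have /andP [/andP [ek _] Sk] := hitP k rk; rewrite mem_filter ek.
Qed.

Lemma SPM_rcons_boundary n M : SPM n M -> SPM n.+1 (rcons M (n.*2, n.*2.+1)).
Proof.
case=> /allP edgeM uniqM sizeM pairM.
split.
- apply/allP => x; rewrite mem_rcons inE => /predU1P [-> | /edgeM].
    by rewrite /is_edge /=; lia.
  by rewrite /is_edge; lia.
- rewrite rcons_uniq uniqM andbT; apply/negP => /edgeM.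
  by rewrite /is_edge /=; lia.
- by rewrite size_rcons sizeM.
- rewrite pairwise_rcons pairM andbT; apply/allP => -[a b] /edgeM.
  by rewrite /is_edge /disjoint_edges /crossing /=; lia.
Qed.

Lemma blocks_restrict n S :
  blocks n.+1 S -> (n.*2, n.*2.+1) \notin S ->
  blocks n [seq e <- S | is_edge n.*2 e].
Proof.
move=> blockS fS M spmM; have [/allP edgeM _ _ _] := spmM.
have /hasP [e] := blockS _ (SPM_rcons_boundary spmM).
rewrite mem_rcons inE => /predU1P [-> /(negP fS) // | Me Se].
by apply/hasP; exists e; rewrite // mem_filter edgeM.
Qed.

Lemma blocks_subset n S T : {subset S <= T} -> blocks n S -> blocks n T.
Proof.
move=> sST blockS M /blockS /hasP [e Me Se].
by apply/hasP; exists e; last exact: sST.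
Qed.

Theorem claim3p4 (m : nat) (B : seq (nat * nat)) :
  2 <= m ->
  blocker m B ->
  (m.*2 - 3, m.*2 - 2) \in B ->
  (m.*2 - 2, m.*2 - 1) \notin B ->
  let B' := [seq x <- B | x != (m.*2 - 3, m.*2 - 2)] in
  all (is_edge (m.*2 - 2)) B' /\ blocker (m - 1) B'.
Proof.
case: m => [//|n] _ [[_ uniqB blockB] sizeB].
have -> : n.+1.*2 - 1 = n.*2.+1 by lia.
have -> : n.+1.*2 - 2 = n.*2 by lia.
have -> : n.+1 - 1 = n by lia.
move=> eB fB B'.
have remB : B' = rem (n.+1.*2 - 3, n.*2) B by rewrite rem_filter.
have sizeB' : size B' = n by rewrite remB size_rem ?sizeB.
have blockB' : blocks n B'.
  apply: blocks_subset (blocks_restrict blockB fB) => e.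
  rewrite !mem_filter => /andP [ee ->]; rewrite andbT.
  by apply: contraTneq ee => ->; rewrite /is_edge /=; lia.
have edgeB' : all (is_edge n.*2) B'.
  by rewrite all_count eqn_leq count_size sizeB' blocks_count_edges.
by do !split; rewrite // filter_uniq.
Qed.
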